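(* Consider the equioriented quiver $1'\xrightarrow{a_0}1\xrightarrow{a_1}2\to\cdots\to r\xrightarrow{a_r}r+1$, with dimension $m$ at the framed vertex $1'$ and dimension $n$ at the nonframed vertices $1,\dots,r+1$, with the complete standard filtration at the nonframed vertices. Then $F^{\bullet}Rep(Q,\beta)=M_{n\times m}\oplus\mathfrak{b}^{\oplus r}$, and for every $1\le p\le n$, every $0\le k\le r$ and every $1\le i_1<\cdots<i_{n-p+1}\le m$, the minor of the $n\times m$ matrix $A_kA_{k-1}\cdots A_0$ with rows $p,p+1,\dots,n$ and columns $i_1,\dots,i_{n-p+1}$ is a $\mathbb{U}_\beta$-invariant polynomial.
   Context: The representation space consists of tuples $(A_0,A_1,\dots,A_r)$ with $A_0\in M_{n\times m}$ an arbitrary complex $n\times m$ matrix (no filtration at the framed vertex) and $A_1,\dots,A_r$ upper triangular $n\times n$ matrices ($\mathfrak{b}$ the upper triangular matrices). $\mathbb{U}_\beta=U^{r+1}$, with $U$ the upper unitriangular $n\times n$ matrices, acting by $(u_1,\dots,u_{r+1})\cdot(A_0,A_1,\dots,A_r)=(u_1A_0,u_2A_1u_1^{-1},\dots,u_{r+1}A_ru_r^{-1})$. *)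

From HB Require Import structures.
From mathcomp Require Import all_boot all_order all_algebra.
From mathcomp Require Import reals.
From mathcomp.real_closed Require Export complex.
From mathcomp Require Export all_boot all_order all_algebra reals.
Set Implicit Arguments. Unset Strict Implicit. Unset Printing Implicit Defensive.
Import GRing.Theory.
Local Open Scope ring_scope.

Definition upper_tri (F : nzRingType) (n : nat) (M : 'M[F]_n) : Prop :=
  forall i j : 'I_n, (j < i)%N -> M i j = 0.

Definition unitri (F : nzRingType) (n : nat) (M : 'M[F]_n) : Prop :=
  upper_tri M /\ forall i : 'I_n, M i i = 1.

(* A point of the representation space is (A0, A 1, ..., A r), A0 : n x m,
   A k : n x n upper triangular for 1 <= k <= r (other values of A unused).
   path_prod A0 A k = A_k A_{k-1} ... A_1 A_0. *)
Fixpoint path_prod (F : nzRingType) (n m : nat) (A0 : 'M[F]_(n, m))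
  (A : nat -> 'M[F]_n) (k : nat) : 'M[F]_(n, m) :=
  match k with
  | 0 => A0
  | k'.+1 => A k'.+1 *m path_prod A0 A k'
  end.

(* Action of (u_1, ..., u_{r+1}) in U^{r+1}:
   (u_1 A0, u_2 A1 u_1^{-1}, ..., u_{r+1} A_r u_r^{-1}). *)
Definition act0 (F : fieldType) (n m : nat) (u : nat -> 'M[F]_n)
  (A0 : 'M[F]_(n, m)) : 'M[F]_(n, m) := u 1%N *m A0.
Definition actA (F : fieldType) (n : nat) (u : nat -> 'M[F]_n)
  (A : nat -> 'M[F]_n) : nat -> 'M[F]_n :=
  fun k => u k.+1 *m A k *m invmx (u k).

Definition minor (F : comNzRingType) (n m q : nat) (f : 'I_q -> 'I_n)
  (s : 'I_q -> 'I_m) (M : 'M[F]_(n, m)) : F := \det (mxsub f s M).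

(* Every group element acts on A_k ... A_0 by left multiplication with the
   single unitriangular matrix u_{k+1}, the inner factors u_j^-1 u_j
   cancelling.  Restricted to the rows p, ..., n, left multiplication by an
   upper triangular matrix only mixes these rows among themselves, through
   a principal submatrix which is again unitriangular; so the minor is
   multiplied by that submatrix's determinant, namely 1. *)
Set Implicit Arguments.
Unset Strict Implicit.
Unset Printing Implicit Defensive.
From mathcomp Require Import zify.
Local Open Scope ring_scope.
Import GRing.Theory.

Lemma det_mxsub_unitri (F : comNzRingType) n q (u : 'M[F]_n) (g : 'I_q -> 'I_n) :
  unitri u -> {homo g : a b / (a < b)%N} -> \det (mxsub g g u) = 1.
Proof.
move=> [u_upper u_diag] g_incr; rewrite -det_tr det_trig.
  by rewrite big1 // => i _; rewrite !mxE u_diag.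
apply/forallP => i; apply/forallP => j; apply/implyP => lt_ij.
by rewrite !mxE u_upper ?g_incr.
Qed.

Lemma unitri_unitmx (F : comUnitRingType) n (u : 'M[F]_n) :
  unitri u -> u \in unitmx.
Proof.
move=> u_unitri; rewrite unitmxE.
by rewrite -[u]mxsub_id det_mxsub_unitri ?unitr1.
Qed.

Lemma mxsub_upper_mulmx (F : comNzRingType) n m q d (u : 'M[F]_n)
    (P : 'M[F]_(n, m)) (f : 'I_q -> 'I_n) (s : 'I_q -> 'I_m) :
  upper_tri u -> (d + q = n)%N -> (forall a : 'I_q, f a = (d + a)%N :> nat) ->
  mxsub f s (u *m P) = mxsub f f u *m mxsub f s P.
Proof.
move=> u_upper def_n f_shift; subst n.
apply/matrixP => a c; rewrite !mxE big_split_ord /=.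
rewrite big1 ?add0r => [|j _]; last first.
  by rewrite u_upper ?mul0r // f_shift ltn_addr /=.
apply: eq_bigr => b _; rewrite !mxE.
suff -> : rshift d b = f b by [].
by apply: val_inj; rewrite /= f_shift.
Qed.

Lemma minor_unitri_mulmx (F : comNzRingType) n m q d (u : 'M[F]_n)
    (P : 'M[F]_(n, m)) (f : 'I_q -> 'I_n) (s : 'I_q -> 'I_m) :
  unitri u -> (d + q = n)%N -> (forall a : 'I_q, f a = (d + a)%N :> nat) ->
  minor f s (u *m P) = minor f s P.
Proof.
move=> u_unitri def_n f_shift.
have u_upper : upper_tri u by case: u_unitri.
rewrite /minor (mxsub_upper_mulmx P s u_upper def_n f_shift).
have f_incr : {homo f : a b / (a < b)%N}.
  by move=> a b lt_ab; rewrite !f_shift ltn_add2l.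
by rewrite det_mulmx (det_mxsub_unitri u_unitri f_incr) mul1r.
Qed.

Lemma path_prod_act (F : fieldType) n m (u : nat -> 'M[F]_n)
    (A0 : 'M[F]_(n, m)) (A : nat -> 'M[F]_n) k :
  (forall j, (1 <= j <= k)%N -> u j \in unitmx) ->
  path_prod (act0 u A0) (actA u A) k = u k.+1 *m path_prod A0 A k.
Proof.
elim: k => [//|k IHk] u_unit /=.
rewrite IHk => [|j /andP[j_gt0 le_jk]]; last by apply: u_unit; rewrite j_gt0 leqW.
rewrite /actA -!mulmxA (mulmxA (invmx _)) mulVmx ?mul1mx //.
by apply: u_unit; rewrite /= leqnn.
Qed.

Theorem mainTheorem6 (R : realType) (n m r : nat)
  (A0 : 'M[R[i]]_(n, m)) (A : nat -> 'M[R[i]]_n) (u : nat -> 'M[R[i]]_n) :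
  (forall k, (1 <= k <= r)%N -> upper_tri (A k)) ->
  (forall k, (1 <= k <= r.+1)%N -> unitri (u k)) ->
  forall (p k : nat) (f : 'I_(n - p + 1) -> 'I_n) (s : 'I_(n - p + 1) -> 'I_m),
    (1 <= p <= n)%N -> (k <= r)%N ->
    (forall a : 'I_(n - p + 1), nat_of_ord (f a) = (p.-1 + a)%N) ->
    (forall a b : 'I_(n - p + 1), (a < b)%N -> (s a < s b)%N) ->
    minor f s (path_prod (act0 u A0) (actA u A) k) = minor f s (path_prod A0 A k).
Proof.
move=> _ u_unitri p k f s p_range le_kr f_rows _.
have u_unit j : (1 <= j <= k)%N -> u j \in unitmx.
  case/andP=> j_gt0 le_jk; apply/unitri_unitmx/u_unitri.
  by rewrite j_gt0 (leq_trans le_jk) // ltnW.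
have rows_split : (p.-1 + (n - p + 1))%N = n by lia.
have u_last : unitri (u k.+1) by apply: u_unitri; rewrite /= ltnS le_kr.
by rewrite (path_prod_act A0 A u_unit) (minor_unitri_mulmx _ _ u_last rows_split f_rows).
Qed.
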